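(* Let $\{\lambda_{-n}\}_{n\in\mathbb{J}}$ be a family of Witt vectors $\lambda_{-n}=(\lambda_{-n,0},\lambda_{-n,1},\dots)\in\mathbf{W}(\mathcal{O}_K)$, and let $(\phi_{-n,0},\phi_{-n,1},\dots)$ be the phantom vector of $\lambda_{-n}$. The formal series $$g^-(T):=\sum_{n\in\mathbb{J}}\sum_{m\ge0}-n\,\phi_{-n,m}\,T^{-np^m}$$ belongs to $\mathcal{E}_K$ if and only if $|\lambda_{-n,m}|<1$ for all $n\in\mathbb{J}$ and all $m\ge0$, and $\lim_{n\in\mathbb{J},\,n\to\infty}\lambda_{-n,m}=0$ for all $m\ge0$.
   Context: $K$ is a field of characteristic $0$, complete for a non-archimedean absolute value, residue field of characteristic $p>0$; $\mathcal{O}_K=\{|x|\le1\}$. $\mathcal{E}_K$ is the ring of Laurent series $\sum_{i\in\mathbb{Z}}a_iT^i$ over $K$ with $\sup|a_i|<\infty$ and $|a_i|\to0$ as $i\to-\infty$. $\mathbb{J}=\{n\in\mathbb{Z}:n\ge1,\ p\nmid n\}$. $\mathbf{W}(\mathcal{O}_K)$ is the ring of $p$-typical Witt vectors with entries in $\mathcal{O}_K$; the phantom vector of $\lambda=(\lambda_0,\lambda_1,\dots)$ is $(\phi_0,\phi_1,\ldots)$, $\phi_m=\sum_{i=0}^mp^i\lambda_i^{p^{m-i}}$. *)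

From HB Require Import structures.
From mathcomp Require Import all_boot all_order all_algebra.
From mathcomp Require Import reals.
Set Implicit Arguments. Unset Strict Implicit. Unset Printing Implicit Defensive.
Import Order.TTheory GRing.Theory Num.Theory.
Local Open Scope ring_scope.

Definition nonarch_abs (K : fieldType) (R : realType) (abs : K -> R) : Prop :=
  (forall x, 0 <= abs x) /\
  (forall x, abs x = 0 <-> x = 0) /\
  (forall x y, abs (x * y) = abs x * abs y) /\
  (forall x y, abs (x + y) <= Num.max (abs x) (abs y)).

Definition abs_complete (K : fieldType) (R : realType) (abs : K -> R) : Prop :=
  forall u : nat -> K,
    (forall eps : R, 0 < eps -> exists N : nat, forall i j : nat,
        (N <= i)%N -> (N <= j)%N -> abs (u i - u j) < eps) ->
    exists l : K, forall eps : R, 0 < eps -> exists N : nat, forall i : nat,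
        (N <= i)%N -> abs (u i - l) < eps.

Definition inJ (p n : nat) : bool := (0 < n)%N && ~~ (p %| n)%N.

Definition phantom (K : fieldType) (p : nat) (lam : nat -> K) (m : nat) : K :=
  \sum_(i < m.+1) (p ^ i)%:R * lam i ^+ (p ^ (m - i)).

(* Coefficient of T^(-k) (k : nat) in
   g^-(T) = sum_{n in J} sum_{m >= 0} -n phi_{-n,m} T^(-n p^m);
   lam n is the Witt vector lambda_{-n}. *)
Definition gminus_negcoef (K : fieldType) (p : nat) (lam : nat -> nat -> K)
    (k : nat) : K :=
  \sum_(0 <= n < k.+1 | inJ p n)
    \sum_(0 <= m < k.+1 | (n * p ^ m == k)%N)
      (- (n%:R * phantom p (lam n) m)).

Definition gminus (K : fieldType) (p : nat) (lam : nat -> nat -> K) (i : int) : K :=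
  if (i < 0)%R then gminus_negcoef p lam `|i|%N else 0.

Definition in_EK (K : fieldType) (R : realType) (abs : K -> R) (a : int -> K) : Prop :=
  (exists B : R, forall i : int, abs (a i) <= B) /\
  (forall eps : R, 0 < eps -> exists N : int, forall i : int,
      (i <= N)%R -> abs (a i) < eps).

(* The coefficient of T^(-k) in g^- is a single term -n phi_{-n,m}, because k = n p^m
   determines n in J and m; as |n| = 1, g^- lies in E_K iff |phi_{-n,m}| -> 0 as
   n p^m -> oo.  Since phi_{m+1}(lambda) = lambda_0^(p^(m+1)) + p phi_m(shifted lambda),
   the phantom components tend to 0 along m only if every |lambda_m| < 1, and
   phi_m = (terms in lambda_i, i < m) + p^m lambda_m gives lambda_{-n,m} -> 0 by
   induction on m.  Conversely each term p^i lambda_i^(p^(m-i)) of phi_{-n,m} is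
   small: for large i because of p^i, for large n because lambda_{-n,i} -> 0, and
   for the finitely many remaining n because |lambda_{-n,i}| < 1. *)

From Pilot Require Import Defs.
From HB Require Import structures.
From mathcomp Require Import all_boot all_order all_algebra.
From mathcomp Require Import reals.
From mathcomp Require Import lra zify.
Set Implicit Arguments. Unset Strict Implicit. Unset Printing Implicit Defensive.
Import Order.TTheory GRing.Theory Num.Theory.
Local Open Scope ring_scope.

Definition eventually (P : nat -> Prop) : Prop := exists N, forall n, (N <= n)%N -> P n.

Lemma eventually_all_ltn (Q : nat -> nat -> Prop) m :
  (forall i, (i < m)%N -> eventually (Q i)) ->
  eventually (fun n => forall i, (i < m)%N -> Q i n).
Proof.
elim: m => [|m IH] evQ; first by exists 0%N.
have [N1 hN1] := IH (fun i lt_im => evQ i (ltnW lt_im)).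
have [N2 hN2] := evQ m (ltnSn m).
exists (maxn N1 N2) => n; rewrite geq_max => /andP[le_N1n le_N2n] i.
by rewrite ltnS leq_eqVlt => /predU1P[->|]; [exact: hN2 | move/hN1; apply].
Qed.

Lemma bernoulli_ineq (R : realDomainType) (t : R) n :
  0 <= t -> 1 + n%:R * t <= (1 + t) ^+ n.
Proof.
move=> t_ge0; elim: n => [|n IH]; first by rewrite mul0r addr0 expr0.
rewrite exprS; apply: le_trans (_ : (1 + t) * (1 + n%:R * t) <= _); last first.
  by rewrite ler_wpM2l // addr_ge0.
have : 0 <= n%:R * t * t by rewrite !mulr_ge0.
rewrite -natr1; lra.
Qed.

Lemma exprn_lt_eventually (R : realType) (c eps : R) :
  0 <= c -> c < 1 -> 0 < eps -> eventually (fun k => c ^+ k < eps).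
Proof.
move=> c_ge0 c_lt1 eps_gt0.
suff [J cJ] : exists J, c ^+ J < eps.
  by exists J => k le_Jk; apply: le_lt_trans cJ; rewrite ler_wiXn2l // ltW.
have [->|c_neq0] := eqVneq c 0; first by exists 1%N; rewrite expr1.
have c_gt0 : 0 < c by rewrite lt_neqAle eq_sym c_neq0.
pose t := c^-1 - 1.
have t_gt0 : 0 < t by rewrite subr_gt0 invf_gt1.
have c_inv : c^-1 = 1 + t by rewrite /t addrC subrK.
pose J := Num.bound (eps * t)^-1.
have le_J : (eps * t)^-1 < J%:R by apply: archi_boundP; rewrite invr_ge0 mulr_ge0 ?ltW.
exists J; rewrite -ltf_pV2 ?posrE ?exprn_gt0 // -exprVn c_inv.
apply: lt_le_trans (bernoulli_ineq J (ltW t_gt0)).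
have : eps^-1 < J%:R * t by rewrite -ltr_pdivrMr // -invfM.
lra.
Qed.

Lemma exprn_expn_lt_eventually (R : realType) (c eps : R) (p i : nat) :
  (1 < p)%N -> 0 <= c -> c < 1 -> 0 < eps -> eventually (fun m => c ^+ (p ^ (m - i)) < eps).
Proof.
move=> p_gt1 c_ge0 c_lt1 eps_gt0.
have [J cJ] := exprn_lt_eventually c_ge0 c_lt1 eps_gt0.
exists (J + i)%N => m le_m; apply: cJ; have := ltn_expl (m - i) p_gt1; lia.
Qed.

Lemma phantomS (K : fieldType) (p : nat) (mu : nat -> K) m :
  Defs.phantom p mu m.+1 =
  mu 0%N ^+ (p ^ m.+1) + p%:R * Defs.phantom p (fun i => mu i.+1) m.
Proof.
rewrite /Defs.phantom big_ord_recl /= expn0 mul1r subn0 mulr_sumr; congr (_ + _).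
by apply: eq_bigr => i _; rewrite /bump /= add1n subSS expnS natrM mulrA.
Qed.

Lemma phantom_recr (K : fieldType) (p : nat) (mu : nat -> K) m :
  Defs.phantom p mu m =
  \sum_(i < m) (p ^ i)%:R * mu i ^+ (p ^ (m - i)) + (p ^ m)%:R * mu m.
Proof. by rewrite /Defs.phantom big_ord_recr /= subnn expn0 expr1. Qed.

Lemma inJ_mul_expn_inj (p n n' m m' : nat) : prime p -> inJ p n -> inJ p n' ->
  (n' * p ^ m' = n * p ^ m)%N -> n' = n /\ m' = m.
Proof.
move=> p_prime /andP[n_gt0 p_ndvd_n] /andP[n'_gt0 p_ndvd_n'] e.
have logn_mul_expn a b : (0 < a)%N -> ~~ (p %| a)%N -> logn p (a * p ^ b) = b.
  move=> a_gt0 p_ndvd_a.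
  rewrite lognM // ?expn_gt0 ?prime_gt0 // pfactorK //.
  by rewrite logn_coprime ?prime_coprime.
have em : m' = m by rewrite -(logn_mul_expn n' m') // e logn_mul_expn.
by move: e; rewrite em => /eqP; rewrite eqn_pmul2r ?expn_gt0 ?prime_gt0 // => /eqP.
Qed.

Lemma sum_seq_single (V : nmodType) (I : eqType) (s : seq I) (P : pred I) (F : I -> V) x :
  uniq s -> x \in s -> P x -> (forall y, P y -> y != x -> F y = 0) ->
  \sum_(i <- s | P i) F i = F x.
Proof.
move=> s_uniq x_s Px F0; rewrite (big_rem x) //= Px big1_seq ?addr0 // => y /andP[Py].
by rewrite (mem_rem_uniq x s_uniq) => /andP[y_neq_x _]; apply: F0.
Qed.

Lemma gminus_negcoef_inJ (K : fieldType) (p : nat) (lam : nat -> nat -> K) n m :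
  prime p -> inJ p n ->
  gminus_negcoef p lam (n * p ^ m) = - (n%:R * Defs.phantom p (lam n) m).
Proof.
move=> p_prime inJn; have /andP[n_gt0 _] := inJn.
have lt_m : (m < n * p ^ m)%N.
  by apply: leq_trans (ltn_expl m (prime_gt1 p_prime)) _; rewrite leq_pmull.
have n_mem : n \in index_iota 0 (n * p ^ m).+1.
  by rewrite mem_index_iota ltnS leq_pmulr ?expn_gt0 ?prime_gt0.
have m_mem : m \in index_iota 0 (n * p ^ m).+1.
  by rewrite mem_index_iota ltnS (ltnW lt_m).
rewrite /gminus_negcoef (sum_seq_single (iota_uniq _ _) n_mem inJn); last first.
  move=> n' inJn' n'_neq_n; apply: big1 => m' /eqP e.
  by have [/eqP] := inJ_mul_expn_inj p_prime inJn inJn' e; rewrite (negPf n'_neq_n).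
pose P m' := (n * p ^ m' == n * p ^ m)%N.
rewrite (@sum_seq_single _ _ _ P _ _ (iota_uniq _ _) m_mem (eqxx _)) //.
move=> m' /eqP e m'_neq_m.
by have [_ /eqP] := inJ_mul_expn_inj p_prime inJn inJn e; rewrite (negPf m'_neq_m).
Qed.

Lemma gminusN (K : fieldType) (p : nat) (lam : nat -> nat -> K) (k : nat) :
  (0 < k)%N -> gminus p lam (- k%:Z) = gminus_negcoef p lam k.
Proof. by move=> k_gt0; rewrite /gminus oppr_lt0 ltz_nat k_gt0 abszN absz_nat. Qed.

Section Ultrametric.
Variables (R : realType) (K : fieldType) (abs : K -> R).
Hypothesis habs : nonarch_abs abs.

Lemma abs_ge0 x : 0 <= abs x. Proof. by case: habs. Qed.

Lemma abs_eq0 x : abs x = 0 <-> x = 0. Proof. by case: habs => _ []. Qed.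

Lemma absM x y : abs (x * y) = abs x * abs y. Proof. by case: habs => _ [_ []]. Qed.

Lemma abs_ultra x y : abs (x + y) <= Num.max (abs x) (abs y).
Proof. by case: habs => _ [_ []]. Qed.

Lemma abs0 : abs 0 = 0. Proof. exact/abs_eq0. Qed.

Lemma abs_gt0 x : x != 0 -> 0 < abs x.
Proof.
move=> x_neq0; rewrite lt_neqAle abs_ge0 andbT eq_sym.
by apply: contra_neq x_neq0 => /abs_eq0.
Qed.

Lemma abs1 : abs 1 = 1.
Proof.
have abs1_neq0 : abs 1 != 0 by apply/eqP => /abs_eq0/eqP; rewrite oner_eq0.
apply: (mulfI abs1_neq0); by rewrite mulr1 -absM mulr1.
Qed.

Lemma absN x : abs (- x) = abs x.
Proof.
have absN1 : abs (-1) = 1.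
  have : abs (-1) ^+ 2 = 1 by rewrite expr2 -absM mulrNN mulr1 abs1.
  by move/eqP; rewrite sqrf_eq1 => /orP[/eqP //|/eqP]; have := abs_ge0 (-1); lra.
by rewrite -mulN1r absM absN1 mul1r.
Qed.

Lemma absX x k : abs (x ^+ k) = abs x ^+ k.
Proof. by elim: k => [|k IH]; rewrite ?expr0 ?abs1 // !exprS absM IH. Qed.

Lemma absD_le x y b : abs x <= b -> abs y <= b -> abs (x + y) <= b.
Proof. by move=> hx hy; apply: le_trans (abs_ultra x y) _; rewrite ge_max hx hy. Qed.

Lemma absD_lt x y b : abs x < b -> abs y < b -> abs (x + y) < b.
Proof. by move=> hx hy; apply: le_lt_trans (abs_ultra x y) _; rewrite gt_max hx hy. Qed.

Lemma abs_addr_lt x y b : abs (x + y) < b -> abs x < b -> abs y < b.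
Proof. by move=> hxy hx; rewrite -[y](addKr x) absD_lt ?absN. Qed.

Lemma abs_addr_dominant x y : abs y < abs x -> abs (x + y) = abs x.
Proof.
move=> lt_yx; apply/le_anti/andP; split.
  by apply: le_trans (abs_ultra x y) _; rewrite ge_max lexx ltW.
have := abs_ultra (x + y) (- y); rewrite addrK absN le_max => /orP[//|le_xy].
by have := lt_le_trans lt_yx le_xy; rewrite ltxx.
Qed.

Lemma abs_sum_le (I : Type) (s : seq I) (P : pred I) (F : I -> K) b :
  0 <= b -> (forall i, P i -> abs (F i) <= b) -> abs (\sum_(i <- s | P i) F i) <= b.
Proof.
move=> b_ge0 hF; elim: s => [|x s IH]; first by rewrite big_nil abs0.
by rewrite big_cons; case: ifP => // Px; apply: absD_le (hF _ Px) IH.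
Qed.

Lemma abs_sum_lt (I : Type) (s : seq I) (P : pred I) (F : I -> K) b :
  0 < b -> (forall i, P i -> abs (F i) < b) -> abs (\sum_(i <- s | P i) F i) < b.
Proof.
move=> b_gt0 hF; elim: s => [|x s IH]; first by rewrite big_nil abs0.
by rewrite big_cons; case: ifP => // Px; apply: absD_lt (hF _ Px) IH.
Qed.

Lemma abs_natr_le1 n : abs n%:R <= 1.
Proof.
elim: n => [|n IH]; first by rewrite abs0.
by rewrite -natr1 absD_le ?abs1.
Qed.

Lemma abs_natr_coprime p n :
  prime p -> abs p%:R < 1 -> coprime p n -> abs n%:R = 1.
Proof.
move=> p_prime p_lt1 co_pn; apply/le_anti; rewrite abs_natr_le1 /= leNgt.
apply/negP => n_lt1.
case: (egcdnP n (prime_gt0 p_prime)) => km kn; rewrite (eqP co_pn) => bezout _.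
have one_eq : 1 = km%:R * p%:R - kn%:R * n%:R :> K.
  by rewrite -!natrM bezout natrD addrAC subrr add0r.
have : abs (1 : K) < 1.
  rewrite {1}one_eq absD_lt ?absN ?absM //.
    by apply: le_lt_trans p_lt1; rewrite ler_piMl ?abs_ge0 ?abs_natr_le1.
  by apply: le_lt_trans n_lt1; rewrite ler_piMl ?abs_ge0 ?abs_natr_le1.
by rewrite abs1 ltxx.
Qed.

Section Phantom.
Variable p : nat.

Lemma abs_phantom_term i k x :
  abs ((p ^ i)%:R * x ^+ k) = abs p%:R ^+ i * abs x ^+ k.
Proof. by rewrite absM natrX !absX. Qed.

Lemma abs_phantom_term_le_expr i k x :
  abs x <= 1 -> abs ((p ^ i)%:R * x ^+ k) <= abs p%:R ^+ i.
Proof.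
move=> x_le1; rewrite abs_phantom_term // ler_piMr ?exprn_ge0 ?abs_ge0 //.
by rewrite exprn_ile1 ?abs_ge0.
Qed.

Lemma abs_phantom_term_le_exprn i k x :
  abs ((p ^ i)%:R * x ^+ k) <= abs x ^+ k.
Proof.
rewrite abs_phantom_term // ler_piMl ?exprn_ge0 ?abs_ge0 //.
by rewrite exprn_ile1 ?abs_ge0 ?abs_natr_le1.
Qed.

Lemma abs_phantom_term_le i k x :
  abs x <= 1 -> (0 < k)%N -> abs ((p ^ i)%:R * x ^+ k) <= abs x.
Proof.
move=> x_le1 k_gt0; apply: le_trans (abs_phantom_term_le_exprn i k x) _.
by rewrite -{2}(expr1 (abs x)) ler_wiXn2l ?abs_ge0.
Qed.

Lemma abs_phantom_le1 (mu : nat -> K) m :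
  (forall i, abs (mu i) <= 1) -> abs (Defs.phantom p mu m) <= 1.
Proof.
move=> mu_le1; apply: abs_sum_le => // i _; rewrite abs_phantom_term //.
by rewrite mulr_ile1 ?exprn_ge0 ?abs_ge0 ?exprn_ile1 ?abs_ge0 ?abs_natr_le1.
Qed.

Definition abs_cvg0 (f : nat -> K) : Prop :=
  forall eps, 0 < eps -> eventually (fun M => abs (f M) < eps).

Hypotheses (p_prime : prime p) (p_lt1 : abs p%:R < 1).

Lemma abs_cvg0_phantom_head (mu : nat -> K) :
  (forall i, abs (mu i) <= 1) -> abs_cvg0 (Defs.phantom p mu) -> abs (mu 0%N) < 1.
Proof.
move=> mu_le1 phi_cvg0; rewrite lt_neqAle mu_le1 andbT; apply/eqP => mu0_eq1.
have [M phi_lt1] := phi_cvg0 1 ltr01.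
have := phi_lt1 M.+1 (leqnSn M).
rewrite phantomS abs_addr_dominant ?absX ?mu0_eq1 ?expr1n ?ltxx //.
rewrite absM; apply: le_lt_trans p_lt1.
by rewrite ler_piMr ?abs_ge0 ?abs_phantom_le1.
Qed.

Hypothesis p_gt0 : 0 < abs p%:R.

Lemma abs_cvg0_phantom_lt1 (mu : nat -> K) j :
  (forall i, abs (mu i) <= 1) -> abs_cvg0 (Defs.phantom p mu) -> abs (mu j) < 1.
Proof.
elim: j mu => [|j IH] mu mu_le1 phi_cvg0; first exact: abs_cvg0_phantom_head.
apply: (IH (fun i => mu i.+1)) => // eps eps_gt0.
have eps'_gt0 : 0 < eps * abs p%:R by rewrite mulr_gt0.
have [M1 hM1] := phi_cvg0 _ eps'_gt0.
have [M2 hM2] := exprn_expn_lt_eventually 0 (prime_gt1 p_prime) (abs_ge0 _)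
  (abs_cvg0_phantom_head mu_le1 phi_cvg0) eps'_gt0.
exists (maxn M1 M2) => M; rewrite geq_max => /andP[le_M1 le_M2].
have := hM1 M.+1 (leqW le_M1); rewrite phantomS => /abs_addr_lt.
rewrite absX absM [abs p%:R * _]mulrC ltr_pM2r //; apply.
by have := hM2 M.+1 (leqW le_M2); rewrite subn0.
Qed.

Section WittFamily.
Variable lam : nat -> nat -> K.
Hypothesis lam_le1 : forall n m, inJ p n -> abs (lam n m) <= 1.

Definition phantom_cvg0 : Prop :=
  forall eps, 0 < eps -> exists k0, forall n m, inJ p n ->
    (k0 <= n * p ^ m)%N -> abs (Defs.phantom p (lam n) m) < eps.

Lemma in_EK_gminusP : in_EK abs (gminus p lam) <-> phantom_cvg0.
Proof.
have abs_inJ n : inJ p n -> abs (n%:R : K) = 1.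
  by case/andP=> n_gt0 p_ndvd_n; rewrite (abs_natr_coprime p_prime) // prime_coprime.
have abs_coef n m : inJ p n ->
    abs (gminus_negcoef p lam (n * p ^ m)) = abs (Defs.phantom p (lam n) m).
  by move=> inJn; rewrite gminus_negcoef_inJ // absN absM abs_inJ // mul1r.
split=> [[_ gminus_cvg0] eps eps_gt0|phi_cvg0].
  have [N hN] := gminus_cvg0 eps eps_gt0; exists `|N|%N => n m inJn le_k.
  have /andP[n_gt0 _] := inJn.
  have k_gt0 : (0 < n * p ^ m)%N by rewrite muln_gt0 n_gt0 expn_gt0 prime_gt0.
  rewrite -abs_coef // -gminusN //; apply: hN; lia.
split.
  exists 1 => i; rewrite /gminus; case: ifP => _; last by rewrite abs0 ler01.
  apply: abs_sum_le => // n inJn; apply: abs_sum_le => // m _.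
  by rewrite absN absM abs_inJ // mul1r abs_phantom_le1 // => j; apply: lam_le1.
move=> eps eps_gt0; have [k0 hk0] := phi_cvg0 eps eps_gt0.
exists (- k0%:Z - 1) => i le_i.
have -> : i = - `|i|%N%:Z by lia.
rewrite gminusN; last by lia.
apply: abs_sum_lt => // n inJn; apply: abs_sum_lt => // m /eqP e.
by rewrite absN absM abs_inJ // mul1r hk0 // e; lia.
Qed.

Lemma phantom_cvg0_lt1 : phantom_cvg0 -> forall n m, inJ p n -> abs (lam n m) < 1.
Proof.
move=> phi_cvg0 n m inJn; have /andP[n_gt0 _] := inJn.
apply: abs_cvg0_phantom_lt1 => // [i|eps eps_gt0]; first exact: lam_le1.
have [k0 hk0] := phi_cvg0 eps eps_gt0; exists k0 => M le_M; apply: hk0 => //.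
apply: leq_trans le_M (leq_trans (ltnW (ltn_expl M (prime_gt1 p_prime))) _).
by rewrite leq_pmull.
Qed.

Lemma phantom_cvg0_lam_cvg0 : phantom_cvg0 -> forall m eps, 0 < eps ->
  eventually (fun n => inJ p n -> forall i, (i < m)%N -> abs (lam n i) < eps).
Proof.
move=> phi_cvg0; elim=> [|m IH] eps eps_gt0; first by exists 0%N.
pose eps' := eps * abs p%:R ^+ m.
have eps'_gt0 : 0 < eps' by rewrite mulr_gt0 ?exprn_gt0.
have le_eps' : eps' <= eps.
  by rewrite ler_piMr ?exprn_ile1 ?abs_ge0 ?(ltW eps_gt0) ?(ltW p_lt1).
have [N hN] := IH eps' eps'_gt0; have [k0 hk0] := phi_cvg0 eps' eps'_gt0.
exists (maxn N k0) => n; rewrite geq_max => /andP[le_Nn le_k0n] inJn i.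
rewrite ltnS leq_eqVlt => /predU1P[->|lt_im]; last first.
  exact: lt_le_trans (hN n le_Nn inJn i lt_im) le_eps'.
have pm_gt0 : (0 < p ^ m)%N by rewrite expn_gt0 prime_gt0.
have := hk0 n m inJn (leq_trans le_k0n (leq_pmulr n pm_gt0)).
rewrite phantom_recr => /abs_addr_lt; rewrite absM natrX absX mulrC ltr_pM2r ?exprn_gt0 //.
apply; apply: abs_sum_lt => // j _.
apply: le_lt_trans (hN n le_Nn inJn j (ltn_ord j)).
by rewrite abs_phantom_term_le ?lam_le1 ?expn_gt0 ?prime_gt0.
Qed.

Lemma lam_cvg0_phantom_cvg0 :
  (forall n m, inJ p n -> abs (lam n m) < 1) ->
  (forall m eps, 0 < eps -> eventually (fun n => inJ p n -> abs (lam n m) < eps)) ->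
  phantom_cvg0.
Proof.
move=> lam_lt1 lam_cvg0 eps eps_gt0.
have p_gt1 := prime_gt1 p_prime.
have [I hI] := exprn_lt_eventually (abs_ge0 _) p_lt1 eps_gt0.
have [N hN] := eventually_all_ltn (fun i _ => lam_cvg0 i eps eps_gt0) (m := I).
have [M hM] : eventually (fun m => forall n, (n < N)%N -> inJ p n ->
    forall i, (i < I)%N -> abs (lam n i) ^+ (p ^ (m - i)) < eps).
  apply: eventually_all_ltn => n _; have [inJn|] := boolP (inJ p n); last by exists 0%N.
  have [M hM] := eventually_all_ltn (m := I) (fun i _ =>
    exprn_expn_lt_eventually i p_gt1 (abs_ge0 _) (lam_lt1 n i inJn) eps_gt0).
  by exists M => m le_Mm _; apply: hM.
exists (N * p ^ M)%N => n m inJn le_k; rewrite /Defs.phantom.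
apply: abs_sum_lt => // i _.
have [le_Ii|lt_iI] := leqP I i.
  by apply: le_lt_trans (hI i le_Ii); rewrite abs_phantom_term_le_expr ?lam_le1.
have [le_Nn|lt_nN] := leqP N n.
  apply: le_lt_trans (hN n le_Nn i lt_iI inJn).
  by rewrite abs_phantom_term_le ?lam_le1 ?expn_gt0 ?prime_gt0.
have le_Mm : (M <= m)%N. (* otherwise n p^m < N p^M *)
  rewrite -(leq_exp2l _ _ p_gt1) -(@leq_pmul2l N) ?(leq_ltn_trans _ lt_nN) //.
  apply: leq_trans le_k _; rewrite leq_mul2r ltnW ?orbT //.
exact: le_lt_trans (abs_phantom_term_le_exprn _ _ _) (hM m le_Mm n lt_nN inJn i lt_iI).
Qed.

End WittFamily.

End Phantom.

End Ultrametric.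

Theorem proposition2p2p3 (R : realType) (K : fieldType) (abs : K -> R) (p : nat)
  (habs : nonarch_abs abs) (hcomplete : abs_complete abs)
  (hchar0 : [pchar K] =i pred0)
  (hp : prime p) (hres : abs (p%:R) < 1)
  (lam : nat -> nat -> K)
  (hlam : forall n m : nat, inJ p n -> abs (lam n m) <= 1) :
  in_EK abs (gminus p lam) <->
  ((forall n m : nat, inJ p n -> abs (lam n m) < 1) /\
   (forall m : nat, forall eps : R, 0 < eps -> exists N : nat,
       forall n : nat, inJ p n -> (N <= n)%N -> abs (lam n m) < eps)).
Proof.
have p_neq0 : p%:R != 0 :> K by apply: contraFN (hchar0 p); rewrite inE hp.
have p_gt0 := abs_gt0 habs p_neq0.
rewrite in_EK_gminusP //; split=> [phi_cvg0|[lam_lt1 lam_cvg0]].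
  split; first exact: phantom_cvg0_lt1.
  move=> m eps eps_gt0.
  have [N hN] := phantom_cvg0_lam_cvg0 habs hp hres p_gt0 hlam phi_cvg0 m.+1 eps_gt0.
  by exists N => n inJn le_Nn; apply: hN.
apply: lam_cvg0_phantom_cvg0 => // m eps eps_gt0.
have [N hN] := lam_cvg0 m eps eps_gt0.
by exists N => n le_Nn inJn; apply: hN.
Qed.
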